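(* Let $G$ be a graph, let $n\equiv 0 \pmod 4$, and let $v$ be a vertex of $G$ with $\sigma_v(G)\subset\mathbb{Z}$. Let $T_v=\{(j,v):j\in\mathbb{Z}_n\}\subseteq V(\uparrow^{n}G)$, and let $X$ be the graph obtained from $\uparrow^{n}G$ by adding a matching $M$ (a set of pairwise vertex-disjoint edges) each of whose edges joins two vertices of $T_v$. Then $X$ has Laplacian perfect state transfer at time $\frac{\pi}{2}$ between the two end vertices of every edge of $M$. Moreover, $X$ is periodic, with period $\frac{\pi}{2}$, at every vertex of $T_v$ not incident to an edge of $M$.
   Context: All graphs are simple, undirected and unweighted. $\sigma_v(G)$ is the Laplacian eigenvalue support of $v$: the set of distinct eigenvalues $\lambda$ of the Laplacian $L=D-A$ of $G$ with $E_\lambda\mathbf{e}_v\neq\mathbf{0}$, $E_\lambda$ the orthogonal projection onto the $\lambda$-eigenspace. The blow-up $\uparrow^{n}G$ has vertex set $\mathbb{Z}_n\times V(G)$, with $(l,u)\sim(m,w)$ iff $u\sim w$ in $G$. For a graph with Laplacian $L$ and $U(t)=\exp(itL)$: Laplacian perfect state transfer between $a,b$ at time $\tau$ means $U(\tau)\mathbf{e}_a=\gamma\mathbf{e}_b$ for some $\gamma\in\mathbb{C}$; the graph is periodic at $a$ at time $\tau>0$ if $|U(\tau)_{a,a}|=1$. *)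

From HB Require Import structures.
From mathcomp Require Import all_boot all_order all_algebra.
From mathcomp Require Import all_classical all_reals all_analysis.
Set Implicit Arguments. Unset Strict Implicit. Unset Printing Implicit Defensive.
Import Order.TTheory GRing.Theory Num.Theory.
Import numFieldNormedType.Exports.
Local Open Scope ring_scope.

Definition simple_graph (T : finType) (e : rel T) : Prop :=
  (forall x y, e x y = e y x) /\ (forall x, e x x = false).

Definition laplacian (R : realType) (T : finType) (e : rel T) : 'M[R]_#|T| :=
  \matrix_(i, j)
    ((if i == j then (#|[set y | e (enum_val i) y]|)%:R else 0)
     - (if e (enum_val i) (enum_val j) then 1 else 0)).

(* exp(itL) = Cos(t,L) + i Sin(t,L), where (splitting the exponential series
   into even and odd terms; L is real)
   Cos(t,L) = sum_k (-1)^k t^(2k)/(2k)! L^(2k),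
   Sin(t,L) = sum_k (-1)^k t^(2k+1)/(2k+1)! L^(2k+1),
   each defined entrywise as the limit of the partial sums. *)
Definition cosM (R : realType) (m : nat) (t : R) (L : 'M[R]_m) : 'M[R]_m :=
  \matrix_(a, b) limn (series (fun k : nat =>
      (-1) ^+ k * t ^+ (2 * k) / ((2 * k)`!)%:R * (L ^+ (2 * k)) a b : R)).
Definition sinM (R : realType) (m : nat) (t : R) (L : 'M[R]_m) : 'M[R]_m :=
  \matrix_(a, b) limn (series (fun k : nat =>
      (-1) ^+ k * t ^+ (2 * k).+1 / ((2 * k).+1`!)%:R * (L ^+ (2 * k).+1) a b : R)).

(* Laplacian perfect state transfer from a to b at time tau:
   U(tau) e_a = gamma e_b for some complex gamma = gr + i gi,
   i.e. column a of U(tau) equals gamma times e_b. *)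
Definition lap_pst (R : realType) (T : finType) (e : rel T) (a b : T) (tau : R)
  : Prop :=
  let L := laplacian R e in
  exists gr gi : R, forall c : 'I_#|T|,
    cosM tau L c (enum_rank a) = (c == enum_rank b)%:R * gr /\
    sinM tau L c (enum_rank a) = (c == enum_rank b)%:R * gi.

Definition lap_periodic (R : realType) (T : finType) (e : rel T) (a : T) (tau : R)
  : Prop :=
  let L := laplacian R e in
  0 < tau /\
  Num.sqrt ((cosM tau L (enum_rank a) (enum_rank a)) ^+ 2
            + (sinM tau L (enum_rank a) (enum_rank a)) ^+ 2) = 1.

(* Orthogonal projection onto the lambda-eigenspace of a symmetric matrix A:
   with B a basis (as rows) of the eigenspace, E = B^T (B B^T)^-1 B. *)
Definition eigproj (R : realType) (m : nat) (A : 'M[R]_m) (lam : R) : 'M[R]_m :=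
  let B := row_base (eigenspace A lam) in
  B^T *m invmx (B *m B^T) *m B.

Definition lap_support (R : realType) (T : finType) (e : rel T) (v : T) (lam : R)
  : bool :=
  let L := laplacian R e in
  eigenvalue L lam && (eigproj L lam *m delta_mx (enum_rank v) (0 : 'I_1) != 0).

Definition blowup (n : nat) (T : finType) (e : rel T) : rel ('I_n * T) :=
  fun x y => e x.2 y.2.

(* A matching on the index set: symmetric, irreflexive, each index has at most
   one partner. The edge {j,k} of M joins (j,v) and (k,v). *)
Definition is_matching (n : nat) (m : rel 'I_n) : Prop :=
  (forall j k, m j k = m k j) /\ (forall j, m j j = false) /\
  (forall j k k', m j k -> m j k' -> k = k').

Definition blowup_matching (n : nat) (T : finType) (e : rel T) (v : T)
  (m : rel 'I_n) : rel ('I_n * T) :=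
  fun x y => @blowup n T e x y || [&& x.2 == v, y.2 == v & m x.1 y.1].

From HB Require Import structures.
From mathcomp Require Import all_boot all_order all_algebra.
From mathcomp Require Import all_classical all_reals all_analysis.
From mathcomp Require Import complex ring.
Import Order.TTheory GRing.Theory Num.Theory.
Import numFieldNormedType.Exports.
Local Open Scope ring_scope.
Set Implicit Arguments. Unset Strict Implicit. Unset Printing Implicit Defensive.

(* Write the indicator of (j, v) as a sum of Laplacian eigenvectors of X and
   evolve each of them.  The Laplacian of G is symmetric, so e_v is a sum of
   eigenvectors f of G, and the hypothesis on sigma_v(G) kills every component
   with a non-integral eigenvalue lam.  The lift (l, u) |-> f u is an
   eigenvector of X for n lam, and h(l) [u = v] with sum h = 0 is one for
   n deg(v) + kappa whenever h is a kappa-eigenvector of the Laplacian of M.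
   Hence e_(j,v) is the lift of e_v / n plus (delta_j - 1/n) [u = v]; for an
   edge jk of M, delta_j - 1/n = (delta_j - delta_k)/2 + ((delta_j + delta_k)/2
   - 1/n) with kappa = 2 and kappa = 0, and for an unmatched j it has kappa = 0.
   As 4 | n, exp(i pi/2 mu) is 1 for mu = n lam, n deg(v) and -1 for
   mu = n deg(v) + 2: at time pi/2 only the (delta_j - delta_k)/2 component
   changes sign, which moves e_(j,v) to e_(k,v), and fixes e_(j,v) if j is
   unmatched. *)

Lemma uniq_map_inj_in (A B : eqType) (f : A -> B) (s : seq A) :
  uniq (map f s) -> {in s &, injective f}.
Proof.
elim: s => //= a s IH /andP [fa us] x y; rewrite !inE.
case/orP => [/eqP ->|xs]; case/orP => [/eqP -> //|ys] fxy.
- by move: fa; rewrite fxy map_f.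
- by move: fa; rewrite -fxy map_f.
- exact: IH.
Qed.

Lemma sum_pair (R : nmodType) (I J : finType) (F : I * J -> R) :
  \sum_y F y = \sum_i \sum_j F (i, j).
Proof. by rewrite pair_bigA; apply: eq_bigr => -[]. Qed.

Lemma sum_eq_natr (R : pzSemiRingType) (I : finType) (j : I) :
  \sum_i ((i == j)%:R : R) = 1.
Proof. by rewrite (bigD1 j) //= eqxx big1 ?addr0 // => i /negbTE ->. Qed.

Lemma ord_natr_neq0 (R : numDomainType) n (j : 'I_n) : n%:R != 0 :> R.
Proof. by rewrite pnatr_eq0 -lt0n (leq_ltn_trans _ (ltn_ord j)). Qed.

(** * Spectral decomposition of real symmetric matrices *)

Section SymmetricEigenDecomposition.
Variable R : rcfType.

Lemma trmx_mul_self_eq0 N (w : 'cV[R]_N) : w^T *m w = 0 -> w = 0.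
Proof.
move=> /matrixP /(_ 0 0); rewrite !mxE => sum_sq0.
have sq0 : forall i, true -> w i 0 * w i 0 = 0.
  apply: psumr_eq0P => [i _|]; first by rewrite -expr2 sqr_ge0.
  by apply: etrans sum_sq0; apply: eq_bigr => i _; rewrite mxE.
apply/matrixP => i j; rewrite (ord1 j) mxE.
by move/eqP: (sq0 i isT); rewrite mulf_eq0 orbb => /eqP.
Qed.

Lemma row_free_mul_trmx_unit m n (B : 'M[R]_(m, n)) :
  row_free B -> B *m B^T \in unitmx.
Proof.
move=> freeB; rewrite unitmxE unitfE; apply/negP => /det0P [w wn0 wBBt].
have : (w *m B)^T^T *m (w *m B)^T = 0.
  by rewrite trmxK trmx_mul mulmxA -(mulmxA w) wBBt mul0mx.
move/trmx_mul_self_eq0/eqP; rewrite trmx_eq0 mulmx_free_eq0 //.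
exact/negP.
Qed.

Lemma symmetric_mulmx_sqr_eq0 N (S : 'M[R]_N) (x : 'cV[R]_N) :
  S^T = S -> S *m (S *m x) = 0 -> S *m x = 0.
Proof.
move=> symS SSx0; apply: trmx_mul_self_eq0.
by rewrite trmx_mul symS -mulmxA SSx0 mulmx0.
Qed.

(* z d = x L x^* is self-conjugate, and d = x x^* > 0. *)
Lemma symmetric_char_poly_root_real N (L : 'M[R]_N) (z : R[i]) : L^T = L ->
  root (char_poly (map_mx (real_complex R) L)) z -> z \is Num.real.
Proof.
move=> symL; rewrite -eigenvalue_root_char => /eigenvalueP [x xL xn0].
set Lc := map_mx (real_complex R) L in xL.
pose xc := (map_mx (fun c : R[i] => c^*) x)^T.
have Lc_real i j : (Lc i j)^* = Lc i j.
  by apply: conj_Creal; apply/complex_realP; exists (L i j); rewrite mxE.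
have Lc_sym i j : Lc i j = Lc j i by rewrite !mxE -[in RHS]symL mxE.
pose q := (x *m Lc *m xc) 0 0; pose d := (x *m xc) 0 0.
have qE : q = z * d by rewrite /q xL -scalemxAl mxE.
have q_real : q^* = q.
  have -> : q = \sum_i \sum_j x 0 i * Lc i j * (x 0 j)^*.
    rewrite /q mxE exchange_big; apply: eq_bigr => j _; rewrite !mxE mulr_suml.
    by apply: eq_bigr => i _; rewrite !mxE.
  rewrite rmorph_sum exchange_big; apply: eq_bigr => i _; rewrite rmorph_sum.
  by apply: eq_bigr => j _; rewrite !rmorphM /= conjCK Lc_real Lc_sym; ring.
have dE : d = \sum_i x 0 i * (x 0 i)^*.
  by rewrite /d mxE; apply: eq_bigr => i _; rewrite !mxE.
have d_ge0 : 0 <= d by rewrite dE sumr_ge0 // => i _; exact: mul_conjC_ge0.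
have d_neq0 : d != 0.
  apply: contraNneq xn0 => d0; apply/eqP/matrixP => i j; rewrite (ord1 i) mxE.
  have := @psumr_eq0P _ _ xpredT _ (fun k _ => mul_conjC_ge0 (x 0 k)).
  by rewrite -dE => /(_ d0 j isT)/eqP; rewrite mul_conjC_eq0 => /eqP.
have : z^* * d = z * d.
  by rewrite -{1}(conj_Creal (ger0_real d_ge0)) -rmorphM -qE; exact: q_real.
by move/(mulIf d_neq0) => zc; rewrite CrealE zc.
Qed.

Definition eigen_decomp N (L : 'M[R]_N) (x : 'cV[R]_N) (s : seq (R * 'cV[R]_N)) :=
  [/\ uniq (map fst s), forall q, q \in s -> L *m q.2 = q.1 *: q.2
    & x = \sum_(q <- s) q.2].

Lemma eigen_decomp_preimage N (L : 'M[R]_N) (r : R) (x : 'cV[R]_N) :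
  L^T = L -> (exists s, eigen_decomp L ((L - r%:M) *m x) s) ->
  exists s, eigen_decomp L x s.
Proof.
move=> symL [s [uniq_s eig_s sum_s]]; set S := L - r%:M in sum_s.
have symS : S^T = S by rewrite /S linearB /= symL tr_scalar_mx.
have SE q : q \in s -> S *m q.2 = (q.1 - r) *: q.2.
  by move=> qs; rewrite /S mulmxBl eig_s // mul_scalar_mx scalerBl.
pose y := \sum_(q <- s | q.1 != r) (q.1 - r)^-1 *: q.2.
have Sy : S *m y = \sum_(q <- s | q.1 != r) q.2.
  rewrite mulmx_sumr big_seq_cond [RHS]big_seq_cond.
  apply: eq_bigr => q /andP [qs qr]; rewrite -scalemxAr SE // scalerA mulVf ?scale1r //.
  by rewrite subr_eq0.
(* S (x - y) is the r-component of S x, which S kills. *)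
have S_xy : S *m (x - y) = 0.
  apply: symmetric_mulmx_sqr_eq0 => //.
  rewrite mulmxBr Sy sum_s (bigID (fun q => q.1 == r)) /= addrK mulmx_sumr.
  by rewrite big_seq_cond big1 // => q /andP [qs /eqP qr]; rewrite SE // qr subrr scale0r.
exists ((r, x - y) :: [seq (q.1, (q.1 - r)^-1 *: q.2) | q <- s & q.1 != r]); split.
- rewrite /= -map_comp (@eq_map _ _ _ fst) //.
  rewrite (subseq_uniq (map_subseq _ (filter_subseq _ _))) // andbT.
  apply/mapP => -[q]; rewrite mem_filter => /andP [/negbTE qr _] /eqP.
  by rewrite eq_sym qr.
- move=> q; rewrite inE => /orP [/eqP -> /=|/mapP [q' q's ->] /=].
    by move/eqP: S_xy; rewrite /S mulmxBl mul_scalar_mx subr_eq0 => /eqP.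
  move: q's; rewrite mem_filter => /andP [_ q's].
  by rewrite -scalemxAr eig_s // !scalerA mulrC.
- by rewrite big_cons big_map big_filter subrK.
Qed.

Lemma eigen_decomp_of_annihilator N (L : 'M[R]_N.+1) (p : {poly R})
    (x : 'cV[R]_N.+1) :
  L^T = L -> p != 0 ->
  (forall z : R[i], root (map_poly (real_complex R) p) z -> z \is Num.real) ->
  horner_mx L p *m x = 0 -> exists s, eigen_decomp L x s.
Proof.
move=> symL; have [k] := ubnP (size p); elim: k p x => // k IHk p x.
move=> size_p p_neq0 real_roots px0.
have [/size1_polyC pC|p_nonconst] := leqP (size p) 1.
  exists [::]; split; rewrite ?big_nil //.
  move: px0; rewrite pC horner_mx_C mul_scalar_mx => /eqP.
  rewrite scaler_eq0 => /orP [|/eqP //].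
  by move=> /eqP c0; rewrite pC c0 polyC0 eqxx in p_neq0.
have [z root_z] : exists z, root (map_poly (real_complex R) p) z.
  by apply/closed_rootP; rewrite size_map_poly gtn_eqF.
have /complex_realP [r zr] := real_roots z root_z.
have /factor_theorem [q pE] : root p r.
  by move: root_z; rewrite zr /root horner_map fmorph_eq0.
have q_neq0 : q != 0 by apply: contraNneq p_neq0; rewrite pE => ->; rewrite mul0r.
apply: (eigen_decomp_preimage (r := r) symL); apply: (IHk q) => //.
- by move: size_p; rewrite pE size_Mmonic ?monicXsubC // size_XsubC addn2 ltnS.
- by move=> w root_w; apply: real_roots; rewrite pE rmorphM rootM root_w.
- by rewrite mulmxA -px0 pE rmorphM /= rmorphB /= horner_mx_X horner_mx_C mulmxE.
Qed.

Lemma symmetric_eigen_decomp N (L : 'M[R]_N) (x : 'cV[R]_N) :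
  L^T = L -> exists s, eigen_decomp L x s.
Proof.
case: N L x => [|N] L x symL.
  by exists [::]; split; rewrite ?big_nil // [x]flatmx0.
apply: (eigen_decomp_of_annihilator (p := char_poly L)) => //.
- exact: monic_neq0 (char_poly_monic L).
- by move=> z; rewrite map_char_poly; exact: symmetric_char_poly_root_real.
- by rewrite Cayley_Hamilton mul0mx.
Qed.

Lemma eigen_decomp_orthogonal N (L : 'M[R]_N) x s q q' :
  L^T = L -> eigen_decomp L x s -> q \in s -> q' \in s -> q != q' ->
  q.2^T *m q'.2 = 0.
Proof.
move=> symL [uniq_s eig_s _] qs q's qq'.
have eig_neq : q.1 != q'.1.
  by apply: contra qq' => /eqP /(uniq_map_inj_in uniq_s qs q's) ->.
have : q.1 *: (q.2^T *m q'.2) = q'.1 *: (q.2^T *m q'.2).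
  rewrite scalemxAl -linearZ /= -eig_s // trmx_mul symL.
  by rewrite -mulmxA eig_s // scalemxAr.
move/eqP; rewrite -subr_eq0 -scalerBl scaler_eq0 subr_eq0 (negbTE eig_neq).
by move/eqP.
Qed.

Lemma eigen_decomp_dot N (L : 'M[R]_N) x s q :
  L^T = L -> eigen_decomp L x s -> q \in s -> q.2^T *m x = q.2^T *m q.2.
Proof.
move=> symL dec qs; have [_ _ ->] := dec.
rewrite mulmx_sumr (bigD1_seq q) //=; last by case: dec => /map_uniq.
rewrite big1_seq ?addr0 // => q' /andP [q'q q's].
by apply: (eigen_decomp_orthogonal symL dec qs q's); rewrite eq_sym.
Qed.

End SymmetricEigenDecomposition.

Section EigenProjection.
Variable R : realType.

Lemma eigproj_mul_eq0 N (A : 'M[R]_N) lam (x : 'cV[R]_N) (w : 'rV[R]_N) :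
  eigproj A lam *m x = 0 -> w *m A = lam *: w -> w *m x = 0.
Proof.
move=> Px0 wA; set B := row_base (eigenspace A lam).
have BP : B *m eigproj A lam = B.
  rewrite /eigproj -/B !mulmxA mulmxV ?mul1mx //.
  exact/row_free_mul_trmx_unit/row_base_free.
have /submxP [D ->] : (w <= B)%MS by rewrite eq_row_base; apply/eigenspaceP.
by rewrite -mulmxA -BP -mulmxA Px0 !mulmx0.
Qed.

Lemma eigen_decomp_eigproj_eq0 N (L : 'M[R]_N) x s q :
  L^T = L -> eigen_decomp L x s -> q \in s -> eigproj L q.1 *m x = 0 -> q.2 = 0.
Proof.
move=> symL dec qs Px0; apply: trmx_mul_self_eq0.
rewrite -(eigen_decomp_dot symL dec qs); apply: eigproj_mul_eq0 Px0 _.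
by case: dec => _ eig_s _; rewrite -{1}symL -trmx_mul eig_s // linearZ.
Qed.

End EigenProjection.

(** * Laplacian eigenfunctions and the evolution operator *)

Section LaplacianEigenfunctions.
Variables (R : realType) (V : finType) (adj : rel V).

Definition degr (x : V) : R := \sum_y (adj x y)%:R.

Definition lap_fun (f : V -> R) (x : V) : R := \sum_y (adj x y)%:R * (f x - f y).

Definition lap_eigenfun (lam : R) (f : V -> R) := forall x, lap_fun f x = lam * f x.

Definition colf (f : V -> R) : 'cV[R]_#|V| := \col_i f (enum_val i).

Lemma laplacian_sym :
  (forall x y, adj x y = adj y x) -> (laplacian R adj)^T = laplacian R adj.
Proof.
move=> adj_sym; apply/matrixP => i j; rewrite !mxE adj_sym.
by case: eqVneq => [->|]; rewrite ?eqxx // eq_sym => /negbTE ->.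
Qed.

Lemma card_adj_degr x : #|[set y | adj x y]|%:R = degr x.
Proof.
rewrite -sum1_card natr_sum big_mkcond; apply: eq_bigr => y _.
by rewrite inE; case: adj.
Qed.

Lemma laplacian_mul_colf f : laplacian R adj *m colf f = colf (lap_fun f).
Proof.
have reindex_enum (F : V -> R) : \sum_y F y = \sum_(k < #|V|) F (enum_val k).
  by rewrite (reindex (@enum_val V V)) /=; last exact: onW_bij (enum_val_bij V).
apply/matrixP => i j; rewrite !mxE /lap_fun reindex_enum.
under eq_bigr do rewrite !mxE mulrBl.
under [RHS]eq_bigr do rewrite mulrBr.
rewrite !sumrB; congr (_ - _); last by apply: eq_bigr => k _; case: adj.
rewrite (bigD1 i) //= eqxx big1 ?addr0 => [|k /negbTE]; last first.
  by rewrite eq_sym => ->; rewrite mul0r.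
by rewrite card_adj_degr /degr reindex_enum mulr_suml.
Qed.

Lemma colf_enum_rank (w : 'cV[R]_#|V|) : colf (fun x => w (enum_rank x) 0) = w.
Proof. by apply/matrixP => i j; rewrite (ord1 j) mxE enum_valK. Qed.

Lemma lap_eigenfunP lam f :
  lap_eigenfun lam f <-> laplacian R adj *m colf f = lam *: colf f.
Proof.
rewrite laplacian_mul_colf; split => [eig_f|eig_f x].
  by apply/matrixP => i j; rewrite !mxE eig_f.
by move/matrixP/(_ (enum_rank x) 0): eig_f; rewrite !mxE enum_rankK.
Qed.

Lemma lap_eigenfunMr lam f c :
  lap_eigenfun lam f -> lap_eigenfun lam (fun x => f x * c).
Proof.
move=> eig_f x; rewrite /lap_fun.
under eq_bigr do rewrite -mulrBl mulrA.
by rewrite -mulr_suml -/(lap_fun f x) eig_f mulrA.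
Qed.

Lemma laplacian_pow_colf lam f k :
  lap_eigenfun lam f -> laplacian R adj ^+ k *m colf f = lam ^+ k *: colf f.
Proof.
move/lap_eigenfunP=> eig_f; elim: k => [|k IHk]; first by rewrite expr0 scale1r mul1mx.
by rewrite exprS -mulmxE -mulmxA IHk -scalemxAr eig_f scalerA exprSr.
Qed.

Definition vertex_decomp (a : V) (s : seq (R * (V -> R))) :=
  (forall p, p \in s -> lap_eigenfun p.1 p.2) /\
  forall x, \sum_(p <- s) p.2 x = (x == a)%:R.

Lemma laplacian_pow_vertex_decomp a s k c : vertex_decomp a s ->
  (laplacian R adj ^+ k) c (enum_rank a) = \sum_(p <- s) p.1 ^+ k * p.2 (enum_val c).
Proof.
move=> [eig_s sum_s].
have deltaE : delta_mx (enum_rank a) 0 = \sum_(p <- s) colf p.2.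
  apply/matrixP => i j; rewrite (ord1 j) summxE !mxE eqxx andbT.
  under eq_bigr do rewrite mxE.
  by rewrite sum_s -(inj_eq enum_rank_inj) enum_valK.
have -> : (laplacian R adj ^+ k) c (enum_rank a)
          = (laplacian R adj ^+ k *m \sum_(p <- s) colf p.2) c 0.
  by rewrite -deltaE -colE mxE.
rewrite mulmx_sumr summxE big_seq [RHS]big_seq; apply: eq_bigr => p ps.
by rewrite (laplacian_pow_colf _ (eig_s p ps)) !mxE.
Qed.

Local Open Scope classical_set_scope.

Lemma lim_series_laplacian_pow a s c (w : nat -> R) (g : nat -> nat) (F : R -> R) :
  vertex_decomp a s ->
  (forall lam, series (fun k => w k * lam ^+ g k) @ \oo --> F lam) ->
  limn (series (fun k => w k * (laplacian R adj ^+ g k) c (enum_rank a)))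
  = \sum_(p <- s) F p.1 * p.2 (enum_val c).
Proof.
move=> dec cvgF; apply: (cvg_lim (@Rhausdorff R)).
have -> : series (fun k => w k * (laplacian R adj ^+ g k) c (enum_rank a))
  = fun N => \sum_(p <- s) series (fun k => w k * p.1 ^+ g k) N * p.2 (enum_val c).
  apply/funext => N; rewrite /series /=.
  under eq_bigr do rewrite (laplacian_pow_vertex_decomp _ _ dec) mulr_sumr.
  rewrite exchange_big; apply: eq_bigr => p _; rewrite mulr_suml.
  by apply: eq_bigr => k _; rewrite mulrA.
apply: (cvg_big (P := xpredT) add_continuous) => p _; exact: cvgMr_tmp.
Qed.

Lemma cosM_vertex_decomp t a s c : vertex_decomp a s ->
  cosM t (laplacian R adj) c (enum_rank a)
  = \sum_(p <- s) cos (t * p.1) * p.2 (enum_val c).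
Proof.
move=> dec; rewrite mxE.
pose w k : R := (-1) ^+ k * t ^+ (2 * k) / (2 * k)`!%:R.
apply: (@lim_series_laplacian_pow _ _ _ w (fun k => 2 * k)%N
                                   (fun lam => cos (t * lam)) dec).
move=> lam; have -> : (fun k => w k * lam ^+ (2 * k)) = cos_coeff' (t * lam).
  by apply/funext => k; rewrite /w /cos_coeff' exprMn -mul2n -exprnP; ring.
exact: cvg_cos_coeff'.
Qed.

Lemma sinM_vertex_decomp t a s c : vertex_decomp a s ->
  sinM t (laplacian R adj) c (enum_rank a)
  = \sum_(p <- s) sin (t * p.1) * p.2 (enum_val c).
Proof.
move=> dec; rewrite mxE.
pose w k : R := (-1) ^+ k * t ^+ (2 * k).+1 / (2 * k).+1`!%:R.
apply: (@lim_series_laplacian_pow _ _ _ w (fun k => (2 * k).+1)%N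
                                   (fun lam => sin (t * lam)) dec).
move=> lam; have -> : (fun k => w k * lam ^+ (2 * k).+1) = sin_coeff' (t * lam).
  by apply/funext => k; rewrite /w /sin_coeff' exprMn -mul2n -exprnP; ring.
exact: cvg_sin_coeff'.
Qed.

End LaplacianEigenfunctions.

Lemma vertex_decomp_support (R : realType) (T : finType) (e : rel T) (v : T) (P : pred R) :
  (forall x y, e x y = e y x) -> (forall lam, lap_support e v lam -> P lam) ->
  exists sG, vertex_decomp e v sG /\ forall p, p \in sG -> P p.1.
Proof.
move=> e_sym supp_P; set L := laplacian R e.
have symL : L^T = L := laplacian_sym R e_sym.
pose x : 'cV[R]_#|T| := delta_mx (enum_rank v) 0.
have [s dec] := symmetric_eigen_decomp x symL; have [_ eig_s sum_s] := dec.
have vanish q : q \in s -> ~~ P q.1 -> q.2 = 0.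
  move=> qs /negP notP; apply/eqP/negPn/negP => q_neq0.
  apply/notP/supp_P/andP; rewrite -/L -/x; split.
    apply/eigenvalueP; exists q.2^T; last by rewrite trmx_eq0.
    by rewrite -{1}symL -trmx_mul eig_s // linearZ.
  by apply: contra q_neq0 => /eqP Px0; rewrite (eigen_decomp_eigproj_eq0 symL dec qs Px0).
exists [seq (q.1, fun u : T => q.2 (enum_rank u) 0) | q : R * 'cV[R]_#|T| <- s & P q.1].
split; last first.
  by move=> p /mapP [q]; rewrite mem_filter => /andP [Pq _] ->.
split=> [p /mapP [q]|u].
  rewrite mem_filter => /andP [_ qs] ->.
  by apply/lap_eigenfunP; rewrite colf_enum_rank eig_s.
rewrite big_map big_filter big_mkcond /=.
have -> : (u == v)%:R = x (enum_rank u) 0 by rewrite mxE (inj_eq enum_rank_inj) andbT.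
rewrite sum_s summxE big_seq [RHS]big_seq; apply: eq_bigr => q qs.
by case: ifP => // /negbT /(vanish q qs) ->; rewrite mxE.
Qed.

(** * cos and sin at multiples of pi / 2 *)

Section QuarterTurns.
Variable R : realType.

Lemma cosD_2pi_int (a : R) (z : int) : cos (a + pi *+ 2 * z%:~R) = cos a.
Proof.
have cosDn b (k : nat) : cos (b + pi *+ 2 * k%:R) = cos b.
  by rewrite mulr_natr periodicn //; exact: cosD2pi.
case: z => k; first exact: cosDn.
by rewrite NegzE mulrNz mulrN -{2}(subrK (pi *+ 2 * k.+1%:R) a) cosDn.
Qed.

Lemma sinD_2pi_int (a : R) (z : int) : sin (a + pi *+ 2 * z%:~R) = sin a.
Proof.
have sinDn b (k : nat) : sin (b + pi *+ 2 * k%:R) = sin b.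
  by rewrite mulr_natr periodicn //; exact: sinD2pi.
case: z => k; first exact: sinDn.
by rewrite NegzE mulrNz mulrN -{2}(subrK (pi *+ 2 * k.+1%:R) a) sinDn.
Qed.

Lemma pihalf_mul_dvd4 (n : nat) (d : R) : (4 %| n)%N -> d \is a Num.int ->
  exists z : int, pi / 2 * (n%:R * d) = pi *+ 2 * z%:~R.
Proof.
move=> /dvdnP [q ->] /intrP [z ->]; exists (q%:Z * z).
by rewrite intrM natrM -mulr_natr; field.
Qed.

Lemma cos_pihalf_dvd4D (n : nat) (d y : R) : (4 %| n)%N -> d \is a Num.int ->
  cos (pi / 2 * (n%:R * d + y)) = cos (pi / 2 * y).
Proof.
move=> n4 d_int; have [z zE] := pihalf_mul_dvd4 n4 d_int.
by rewrite mulrDr addrC zE cosD_2pi_int.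
Qed.

Lemma sin_pihalf_dvd4D (n : nat) (d y : R) : (4 %| n)%N -> d \is a Num.int ->
  sin (pi / 2 * (n%:R * d + y)) = sin (pi / 2 * y).
Proof.
move=> n4 d_int; have [z zE] := pihalf_mul_dvd4 n4 d_int.
by rewrite mulrDr addrC zE sinD_2pi_int.
Qed.

End QuarterTurns.

(** * The blow-up with a matching on T_v *)

Section BlowupMatching.
Variables (R : realType) (T : finType) (e : rel T) (n : nat) (v : T) (m : rel 'I_n).
Hypothesis e_irr : forall x, e x x = false.

Local Notation X := (blowup_matching e v m).

Lemma blowup_matching_natE l u l' u' :
  (X (l, u) (l', u'))%:R = (e u u')%:R + ([&& u == v, u' == v & m l l'])%:R :> R.
Proof.
rewrite /blowup_matching /blowup /=.
by case: (eqVneq u v) => [->|]; case: (eqVneq u' v) => [->|] /=;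
  rewrite ?e_irr ?add0r ?orbF ?addr0.
Qed.

Lemma lap_eigenfun_lift lam (g : T -> R) :
  lap_eigenfun e lam g -> lap_eigenfun X (n%:R * lam) (fun y => g y.2).
Proof.
move=> eig_g [l u]; rewrite /lap_fun sum_pair /=.
have row_sum l' : \sum_u' (X (l, u) (l', u'))%:R * (g u - g u') = lam * g u.
  rewrite -eig_g; apply: eq_bigr => u' _; rewrite blowup_matching_natE.
  by case: (eqVneq u v) => [->|]; case: (eqVneq u' v) => [->|] /=;
    rewrite ?subrr ?mulr0 ?addr0.
by under eq_bigr do rewrite row_sum; rewrite sumr_const card_ord -mulrA mulr_natl.
Qed.

Lemma lap_eigenfun_Tv kappa (h : 'I_n -> R) :
  \sum_l h l = 0 -> lap_eigenfun m kappa h ->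
  lap_eigenfun X (n%:R * degr R e v + kappa) (fun y => h y.1 * (y.2 == v)%:R).
Proof.
move=> sum_h eig_h [l u]; rewrite /lap_fun sum_pair /=.
case: (eqVneq u v) => [->|uv].
  have row_sum l' : \sum_u' (X (l, v) (l', u'))%:R * (h l * 1 - h l' * (u' == v)%:R)
                    = degr R e v * h l + (m l l')%:R * (h l - h l').
    rewrite (bigD1 v) //= blowup_matching_natE eqxx e_irr add0r !mulr1.
    rewrite /degr [X in X * h l](bigD1 v) //= e_irr add0r mulr_suml addrC.
    congr (_ + _); apply: eq_bigr => u' /negbTE u'v.
    by rewrite blowup_matching_natE u'v eqxx andbF addr0 mulr0 subr0.
  under eq_bigr do rewrite row_sum.
  rewrite big_split /= -/(lap_fun m h l) eig_h sumr_const card_ord -mulr_natl.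
  by rewrite mulr1; ring.
have row_sum l' : \sum_u' (X (l, u) (l', u'))%:R * (h l * 0 - h l' * (u' == v)%:R)
                  = - ((e u v)%:R * h l').
  rewrite (bigD1 v) //= blowup_matching_natE (negbTE uv) eqxx /= addr0.
  rewrite big1 ?addr0 => [|u' /negbTE u'v]; first by rewrite mulr0 sub0r mulr1 mulrN.
  by rewrite blowup_matching_natE u'v (negbTE uv) /= !mulr0 subrr mulr0.
under eq_bigr do rewrite row_sum.
by rewrite sumrN -mulr_sumr sum_h !mulr0 oppr0.
Qed.

Hypothesis m_matching : is_matching m.

Lemma lap_fun_matched (f : 'I_n -> R) l l0 : m l l0 -> lap_fun m f l = f l - f l0.
Proof.
have [_ [_ m_uniq]] := m_matching.
move=> ml0; rewrite /lap_fun (bigD1 l0) //= ml0 mul1r big1 ?addr0 // => l' l'l0.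
case: (boolP (m l l')) => [ml'|]; last by rewrite mul0r.
by rewrite (m_uniq _ _ _ ml' ml0) eqxx in l'l0.
Qed.

Lemma lap_fun_unmatched (f : 'I_n -> R) l :
  (forall l', ~~ m l l') -> lap_fun m f l = 0.
Proof.
move=> unmatched; rewrite /lap_fun big1 // => l' _.
by rewrite (negbTE (unmatched l')) mul0r.
Qed.

Lemma matching_partner_eq l l0 l' l0' :
  m l l0 -> m l' l0' -> (l == l') = (l0 == l0').
Proof.
have [m_sym [_ m_uniq]] := m_matching.
move=> ml0 ml0'; apply/eqP/eqP => [ll'|l0l0'].
  by rewrite ll' in ml0; exact: m_uniq ml0 ml0'.
by rewrite m_sym l0l0' in ml0; rewrite m_sym in ml0'; exact: m_uniq ml0 ml0'.
Qed.

Lemma lap_fun_matching_edge j k (a b c : R) l : m j k ->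
  lap_fun m (fun l => a * (l == j)%:R + b * (l == k)%:R + c) l
  = (a - b) * ((l == j)%:R - (l == k)%:R).
Proof.
have [m_sym _] := m_matching.
move=> mjk; have mkj : m k j by rewrite m_sym.
have [l0 ml0|unmatched] := pickP (m l).
  rewrite (lap_fun_matched _ ml0) -(matching_partner_eq ml0 mjk).
  by rewrite -(matching_partner_eq ml0 mkj); ring.
have [lj lk] : (l == j) = false /\ (l == k) = false.
  by split; apply: contraFF (unmatched _) => /eqP ->; [exact: mjk | exact: mkj].
by rewrite lap_fun_unmatched ?lj ?lk ?subrr ?mulr0 // => l'; rewrite unmatched.
Qed.

Lemma lap_fun_matching_isolated j (a c : R) l : (forall k, ~~ m j k) ->
  lap_fun m (fun l => a * (l == j)%:R + c) l = 0.
Proof.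
have [m_sym _] := m_matching.
move=> isolated_j; have [l0 ml0|unmatched] := pickP (m l).
  have lj : (l == j) = false by apply: contraNF (isolated_j l0) => /eqP <-.
  have l0j : (l0 == j) = false.
    by apply: contraNF (isolated_j l) => /eqP <-; rewrite m_sym.
  by rewrite (lap_fun_matched _ ml0) lj l0j subrr.
by rewrite lap_fun_unmatched // => l'; rewrite unmatched.
Qed.

Definition matching_decomp (j : 'I_n) (hs : seq (R * ('I_n -> R))) :=
  (forall p, p \in hs -> \sum_l p.2 l = 0 /\ lap_eigenfun m p.1 p.2) /\
  forall l, \sum_(p <- hs) p.2 l = (l == j)%:R - n%:R^-1.

Variable sG : seq (R * (T -> R)).
Hypothesis sG_decomp : vertex_decomp e v sG.
Hypothesis sG_int : forall p, p \in sG -> p.1 \is a Num.int.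
Hypothesis n_dvd4 : (4 %| n)%N.

Definition blowup_decomp (hs : seq (R * ('I_n -> R))) : seq (R * ('I_n * T -> R)) :=
  [seq (n%:R * p.1, fun y => p.2 y.2 / n%:R) | p <- sG] ++
  [seq (n%:R * degr R e v + p.1, fun y => p.2 y.1 * (y.2 == v)%:R) | p <- hs].

Lemma vertex_decomp_blowup j hs :
  matching_decomp j hs -> vertex_decomp X (j, v) (blowup_decomp hs).
Proof.
have [eig_sG sum_sG] := sG_decomp; move=> [eig_hs sum_hs]; split.
  move=> p; rewrite mem_cat => /orP [] /mapP [q qs ->] /=.
    exact/lap_eigenfunMr/lap_eigenfun_lift/eig_sG.
  by have [sum_q eig_q] := eig_hs q qs; exact: lap_eigenfun_Tv.
move=> [l u]; rewrite big_cat !big_map /= -!mulr_suml sum_sG sum_hs xpair_eqE.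
by case: (u == v); rewrite ?andbT ?andbF /=; ring.
Qed.

Lemma degr_int : degr R e v \is a Num.int.
Proof. by apply: rpred_sum => u _; exact: rpred_nat. Qed.

Lemma cosM_blowup j hs c : matching_decomp j hs ->
  cosM (pi / 2) (laplacian R X) c (enum_rank (j, v))
  = ((enum_val c).2 == v)%:R
    * (n%:R^-1 + \sum_(p <- hs) cos (pi / 2 * p.1) * p.2 (enum_val c).1).
Proof.
move=> dec; rewrite (cosM_vertex_decomp _ _ (vertex_decomp_blowup dec)) big_cat !big_map /=.
have [_ sum_sG] := sG_decomp.
have -> : \sum_(p <- sG) cos (pi / 2 * (n%:R * p.1)) * (p.2 (enum_val c).2 / n%:R)
          = ((enum_val c).2 == v)%:R / n%:R.
  rewrite -sum_sG mulr_suml big_seq [RHS]big_seq; apply: eq_bigr => p ps.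
  by rewrite -[n%:R * p.1]addr0 cos_pihalf_dvd4D ?sG_int // mulr0 cos0 mul1r.
under eq_bigr do rewrite cos_pihalf_dvd4D ?degr_int //.
by rewrite mulrDr mulr_sumr; congr (_ + _); apply: eq_bigr => p _; ring.
Qed.

Lemma sinM_blowup j hs c : matching_decomp j hs ->
  sinM (pi / 2) (laplacian R X) c (enum_rank (j, v))
  = ((enum_val c).2 == v)%:R * \sum_(p <- hs) sin (pi / 2 * p.1) * p.2 (enum_val c).1.
Proof.
move=> dec; rewrite (sinM_vertex_decomp _ _ (vertex_decomp_blowup dec)) big_cat !big_map /=.
rewrite big_seq big1 ?add0r => [|p ps]; last first.
  by rewrite -[n%:R * p.1]addr0 sin_pihalf_dvd4D ?sG_int // mulr0 sin0 mul0r.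
under eq_bigr do rewrite sin_pihalf_dvd4D ?degr_int //.
by rewrite mulr_sumr; apply: eq_bigr => p _; ring.
Qed.

Lemma sum_affine_eq_natr (j k : 'I_n) (a b c : R) :
  \sum_l (a * (l == j)%:R + b * (l == k)%:R + c) = a + b + c * n%:R.
Proof.
by rewrite !big_split /= -!mulr_sumr !sum_eq_natr sumr_const card_ord !mulr1 mulr_natr.
Qed.

Lemma lap_pst_blowup_matching j k : m j k -> lap_pst X (j, v) (k, v) (pi / 2 : R).
Proof.
move=> mjk; have n_neq0 := ord_natr_neq0 R j.
pose hs : seq (R * ('I_n -> R)) :=
  [:: (2, fun l => 2^-1 * (l == j)%:R + (- 2^-1) * (l == k)%:R + 0);
      (0, fun l => 2^-1 * (l == j)%:R + 2^-1 * (l == k)%:R + (- n%:R^-1))].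
have dec : matching_decomp j hs.
  split=> [p|l]; last by rewrite !big_cons big_nil /=; field.
  rewrite !inE => /orP [] /eqP -> /=; rewrite sum_affine_eq_natr.
    by split=> [|l]; [field | rewrite lap_fun_matching_edge //; field].
  by split=> [|l]; [field | rewrite lap_fun_matching_edge //; field].
exists 1, 0 => c; rewrite (cosM_blowup _ dec) (sinM_blowup _ dec) !big_cons !big_nil /=.
rewrite mulr0 cos0 sin0 divfK ?pnatr_eq0 // cospi sinpi.
have -> : (c == enum_rank (k, v)) = (enum_val c == (k, v)).
  by rewrite -(inj_eq enum_rank_inj) enum_valK.
by case: (enum_val c) => l u; rewrite xpair_eqE -mulnb natrM /=; split; field.
Qed.

Lemma lap_periodic_blowup_matching j :
  (forall k, ~~ m j k) -> lap_periodic X (j, v) (pi / 2 : R).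
Proof.
move=> isolated_j; have n_neq0 := ord_natr_neq0 R j.
pose hs : seq (R * ('I_n -> R)) := [:: (0, fun l => 1 * (l == j)%:R - n%:R^-1)].
have dec : matching_decomp j hs.
  split=> [p|l]; last by rewrite big_cons big_nil /=; ring.
  rewrite inE => /eqP -> /=; split=> [|l]; last first.
    by rewrite lap_fun_matching_isolated // mul0r.
  rewrite big_split /= -mulr_sumr sum_eq_natr sumr_const card_ord.
  by rewrite -[_ *+ n]mulr_natr; field.
split; first by have /andP [] := @pihalf_02 R.
rewrite (cosM_blowup _ dec) (sinM_blowup _ dec) !big_cons !big_nil enum_rankK /= !eqxx.
rewrite mulr0 cos0 sin0 mul0r !addr0 mulr0 expr0n /= addr0 !mulr1n !mul1r.
by rewrite addrC subrK expr1n sqrtr1.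
Qed.

End BlowupMatching.

Theorem theorem10 (R : realType) (T : finType) (e : rel T) (n : nat) (v : T)
  (m : rel 'I_n) :
  simple_graph e ->
  (4 %| n)%N ->
  (forall lam : R, lap_support e v lam -> lam \is a Num.int) ->
  is_matching m ->
  (forall j k : 'I_n, m j k ->
     lap_pst (blowup_matching e v m) (j, v) (k, v) (pi / 2 : R)) /\
  (forall j : 'I_n, (forall k, ~~ m j k) ->
     lap_periodic (blowup_matching e v m) (j, v) (pi / 2 : R)).
Proof.
move=> [e_sym e_irr] n_dvd4 supp_int m_matching.
have [sG [sG_decomp sG_int]] := vertex_decomp_support e_sym supp_int.
split.
- move=> j k; exact: (lap_pst_blowup_matching e_irr m_matching sG_decomp sG_int n_dvd4).
- move=> j; exact: (lap_periodic_blowup_matching e_irr m_matching sG_decomp sG_int n_dvd4).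
Qed.
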